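(* There is an absolute constant $C>0$ such that for every $m\in\mathbb{N}$ and every $\boldsymbol{\sigma}\in\{0,1\}^m$, with $N=2^{m+1}$, $$ \left|L_2(\widetilde{\mathcal{H}}_m^{\mathrm{sym}}(\boldsymbol{\sigma}))-\frac{1}{N}\sqrt{\frac{\log N}{24\log 2}}\right|\le \frac{C}{N}, $$ i.e. $L_2(\widetilde{\mathcal{H}}_m^{\mathrm{sym}}(\boldsymbol{\sigma}))=\frac{1}{N}\sqrt{\frac{\log{N}}{24\log{2}}}+\mathcal{O}\left(\frac{1}{N}\right)$, where $\log$ is the natural logarithm.
   Context: For an $N$-element point multiset $\mathcal{P}=\{\boldsymbol{x}_0,\dots,\boldsymbol{x}_{N-1}\}$ in $[0,1]^2$ and $\alpha,\beta\in(0,1]$, the local discrepancy is $\Delta(\alpha,\beta,\mathcal{P})=A([0,\alpha)\times[0,\beta),\mathcal{P})-N\alpha\beta$, where $A([0,\alpha)\times[0,\beta),\mathcal{P})$ is the number of indices $0\le n\le N-1$ with $\boldsymbol{x}_n\in[0,\alpha)\times[0,\beta)$ (points counted with multiplicity). The $L_2$ discrepancy is $L_2(\mathcal{P})=\frac1N\left(\int_0^1\int_0^1|\Delta(\alpha,\beta,\mathcal{P})|^2\,d\alpha\,d\beta\right)^{1/2}$. For $\boldsymbol{\sigma}\in\{0,1\}^m$ the shifted Hammersley point set is $$\mathcal{H}_m(\boldsymbol{\sigma})=\left\{\left(\frac{t_m}{2}+\frac{t_{m-1}}{2^2}+\dots+\frac{t_1}{2^m},\ \frac{s_1}{2}+\dots+\frac{s_m}{2^m}\right):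 t_1,\dots,t_m\in\{0,1\}\right\},$$ where $s_j=t_j\oplus\sigma_j$ ($\oplus$ is addition modulo 2); it has $2^m$ points. The set $\widetilde{\mathcal{H}}_m^{\mathrm{sym}}(\boldsymbol{\sigma})$ is the union (as a multiset of $2^{m+1}$ points, some of which may coincide) of $\mathcal{H}_m(\boldsymbol{\sigma})$ with $\{(x,1-y):(x,y)\in\mathcal{H}_m(\boldsymbol{\sigma})\}$. *)

From Stdlib Require Import Reals List.
From Coquelicot Require Import Coquelicot.
Import ListNotations.
Open Scope R_scope.

Definition point := (R * R)%type.

Fixpoint all_bits (m : nat) : list (list bool) :=
  match m with
  | O => [ [] ]
  | S k => map (cons false) (all_bits k) ++ map (cons true) (all_bits k)
  end.

Definition b2R (b : bool) : R := if b then 1 else 0.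

Definition bit (t : list bool) (j : nat) : bool := nth (j - 1) t false.

Definition hx (m : nat) (t : list bool) : R :=
  fold_right Rplus 0
    (map (fun j => b2R (bit t j) / 2 ^ (m + 1 - j)) (seq 1 m)).

Definition hy (m : nat) (sigma t : list bool) : R :=
  fold_right Rplus 0
    (map (fun j => b2R (xorb (bit t j) (bit sigma j)) / 2 ^ j) (seq 1 m)).

Definition hammersley (m : nat) (sigma : list bool) : list point :=
  map (fun t => (hx m t, hy m sigma t)) (all_bits m).

Definition hammersley_sym (m : nat) (sigma : list bool) : list point :=
  hammersley m sigma ++ map (fun p => (fst p, 1 - snd p)) (hammersley m sigma).

Definition count_box (P : list point) (a b : R) : nat :=
  length (filter (fun p => if Rlt_dec (fst p) a then
                             if Rlt_dec (snd p) b then true else false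
                           else false) P).

Definition local_disc (P : list point) (a b : R) : R :=
  INR (count_box P a b) - INR (length P) * a * b.

Definition L2_disc (P : list point) : R :=
  / INR (length P) *
  sqrt (RInt (fun b => RInt (fun a => (Rabs (local_disc P a b)) ^ 2) 0 1) 0 1).

(* On every cell of the 2^m x 2^m grid the local discrepancy of the symmetrized set is
   c(k,l) - N a b with a constant count c(k,l), so N^2 L2^2 is an explicit polynomial in the
   moments sum c, sum k c, sum l c, sum k l c and sum c^2 of the count array.  Refining the
   grid (m -> m+1) splits every column and every row in two, and the new count array is
   given by the old one and by two 0/1 column arrays, one for each half of the set.  This
   turns the moments into solutions of linear recursions, with closed forms in 2^m, m and
   the number of ones of sigma, and yields
   N^2 L2^2 = (m+1)/24 + 7/12 + O(m 2^-m) = log N / (24 log 2) + O(1); since this is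
   bounded away from 0, taking square roots costs only O(1). *)

From Stdlib Require Import Reals List Lia Lra.
From Coquelicot Require Import Coquelicot.
Import ListNotations.
Open Scope R_scope.

Fixpoint sumR (n : nat) (f : nat -> R) : R :=
  match n with O => 0 | S n' => sumR n' f + f n' end.

Lemma sumR_S n f : sumR (S n) f = sumR n f + f n.
Proof. reflexivity. Qed.

Lemma sumR_ext n f g : (forall i, (i < n)%nat -> f i = g i) -> sumR n f = sumR n g.
Proof. induction n; intros H; simpl; auto. rewrite IHn, H; auto. Qed.

Lemma sumR_plus n f g : sumR n (fun i => f i + g i) = sumR n f + sumR n g.
Proof. induction n; simpl; [ring | rewrite IHn; ring]. Qed.

Lemma sumR_minus n f g : sumR n (fun i => f i - g i) = sumR n f - sumR n g.
Proof. induction n; simpl; [ring | rewrite IHn; ring]. Qed.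

Lemma sumR_scal n a f : sumR n (fun i => a * f i) = a * sumR n f.
Proof. induction n; simpl; [ring | rewrite IHn; ring]. Qed.

Lemma sumR_add n p f : sumR (n + p) f = sumR n f + sumR p (fun i => f (n + i)%nat).
Proof.
  induction p; simpl; [rewrite Nat.add_0_r; ring|].
  replace (n + S p)%nat with (S (n + p)) by lia. simpl. rewrite IHp. ring.
Qed.

Lemma sumR_even_odd n f :
  sumR (n + n) f = sumR n (fun i => f (2 * i)%nat + f (2 * i + 1)%nat).
Proof.
  induction n; [reflexivity|].
  replace (S n + S n)%nat with (S (S (n + n))) by lia.
  rewrite !sumR_S, IHn.
  replace (2 * n)%nat with (n + n)%nat by lia.
  replace (n + n + 1)%nat with (S (n + n)) by lia. ring.
Qed.

Lemma sumR_const n a : sumR n (fun _ => a) = INR n * a.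
Proof. induction n; [simpl; ring|]. rewrite sumR_S, IHn, S_INR; ring. Qed.

Lemma sumR_INR n : sumR n (fun k => INR k) = INR n * (INR n - 1) / 2.
Proof. induction n; [simpl; field|]. rewrite sumR_S, IHn, S_INR; field. Qed.

Lemma sumR_INR_sq n :
  sumR n (fun k => INR k * INR k) = INR n * (INR n - 1) * (2 * INR n - 1) / 6.
Proof. induction n; [simpl; field|]. rewrite sumR_S, IHn, S_INR; field. Qed.

Lemma sumR_cube_telescope n :
  sumR n (fun k => 3 * (INR k * INR k) + 3 * INR k + 1) = INR n ^ 3.
Proof. induction n; [simpl; ring|]. rewrite sumR_S, IHn, S_INR. ring. Qed.

Definition sum2 (n : nat) (F : nat -> nat -> R) : R :=
  sumR n (fun l => sumR n (fun k => F k l)).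

Lemma sum2_ext n F G :
  (forall k l, (k < n)%nat -> (l < n)%nat -> F k l = G k l) -> sum2 n F = sum2 n G.
Proof. intros H; apply sumR_ext; intros; apply sumR_ext; auto. Qed.

Lemma sum2_plus n F G : sum2 n (fun k l => F k l + G k l) = sum2 n F + sum2 n G.
Proof. unfold sum2. rewrite <- sumR_plus. apply sumR_ext; intros. apply sumR_plus. Qed.

Lemma sum2_minus n F G : sum2 n (fun k l => F k l - G k l) = sum2 n F - sum2 n G.
Proof. unfold sum2. rewrite <- sumR_minus. apply sumR_ext; intros. apply sumR_minus. Qed.

Lemma sum2_scal n a F : sum2 n (fun k l => a * F k l) = a * sum2 n F.
Proof. unfold sum2. rewrite <- sumR_scal. apply sumR_ext; intros. apply sumR_scal. Qed.

Lemma sum2_prod n p q : sum2 n (fun k l => p k * q l) = sumR n p * sumR n q.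
Proof.
  unfold sum2. rewrite <- sumR_scal.
  apply sumR_ext; intros. rewrite Rmult_comm, <- sumR_scal. apply sumR_ext; intros; ring.
Qed.

Lemma sum2_double P F : sum2 (P + P) F =
  sum2 P (fun k l => F (2 * k)%nat l + F (2 * k + 1)%nat l
                   + F (2 * k)%nat (P + l)%nat + F (2 * k + 1)%nat (P + l)%nat).
Proof.
  unfold sum2. rewrite sumR_add, <- sumR_plus. apply sumR_ext; intros.
  rewrite !sumR_even_odd, <- !sumR_plus. apply sumR_ext; intros. ring.
Qed.

Definition bipoly (a0 ak akk al akl akkl : R) (k l : nat) : R :=
  a0 + ak * INR k + akk * (INR k * INR k) + al * INR l + akl * (INR k * INR l)
  + akkl * (INR k * INR k * INR l).

Lemma sum2_bipoly n a0 ak akk al akl akkl :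
  sum2 n (bipoly a0 ak akk al akl akkl) =
  a0 * (INR n * INR n) + ak * (INR n * (INR n - 1) / 2 * INR n)
  + akk * (INR n * (INR n - 1) * (2 * INR n - 1) / 6 * INR n)
  + al * (INR n * (INR n * (INR n - 1) / 2))
  + akl * (INR n * (INR n - 1) / 2 * (INR n * (INR n - 1) / 2))
  + akkl * (INR n * (INR n - 1) * (2 * INR n - 1) / 6 * (INR n * (INR n - 1) / 2)).
Proof.
  set (one := fun _ : nat => 1).
  transitivity (sum2 n (fun k l => a0 * (one k * one l) + ak * (INR k * one l)
    + akk * (INR k * INR k * one l) + al * (one k * INR l) + akl * (INR k * INR l)
    + akkl * (INR k * INR k * INR l))).
  { apply sum2_ext; intros; unfold bipoly, one; ring. }
  rewrite !sum2_plus, !sum2_scal, !sum2_prod.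
  unfold one; rewrite sumR_const, sumR_INR, sumR_INR_sq. ring.
Qed.

Definition moment (n : nat) (c w : nat -> nat -> R) : R := sum2 n (fun k l => c k l * w k l).

Definition w1 (k l : nat) : R := 1.
Definition wk (k l : nat) : R := INR k.
Definition wl (k l : nat) : R := INR l.
Definition wkl (k l : nat) : R := INR k * INR l.
Definition addf (f g : nat -> nat -> R) (k l : nat) : R := f k l + g k l.

Lemma moment_comm n f g : moment n f g = moment n g f.
Proof. apply sum2_ext; intros; apply Rmult_comm. Qed.

Lemma moment_addf_comm n c f g : moment n c (addf f g) = moment n c (addf g f).
Proof. apply sum2_ext; intros; unfold addf; ring. Qed.

(* Count arrays at resolution 2P in terms of those at resolution P: column k splits into
   columns 2k, 2k+1 and row l into rows l, P+l; [f] and [g] count the points of the two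
   halves of the symmetrized set in a column, up to a given row. *)
Definition doubling (P : nat) (c' f' g' c f g : nat -> nat -> R) : Prop :=
  forall k l, (k < P)%nat -> (l < P)%nat ->
   c (2 * k)%nat l = c' k l - g' k l /\
   c (2 * k + 1)%nat l = c' k l /\
   c (2 * k)%nat (P + l)%nat = c' k l + 2 * INR k + 1 - f' k l /\
   c (2 * k + 1)%nat (P + l)%nat = c' k l + 2 * INR k + 2 /\
   f (2 * k)%nat l = f' k l /\
   f (2 * k + 1)%nat l = 0 /\
   f (2 * k)%nat (P + l)%nat = 1 /\
   f (2 * k + 1)%nat (P + l)%nat = f' k l /\
   g (2 * k)%nat l = 0 /\
   g (2 * k + 1)%nat l = g' k l /\
   g (2 * k)%nat (P + l)%nat = g' k l /\
   g (2 * k + 1)%nat (P + l)%nat = 1 /\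
   f' k l * f' k l = f' k l /\ g' k l * g' k l = g' k l.

Lemma INR_double k : INR (2 * k) = 2 * INR k.
Proof. rewrite mult_INR; simpl; ring. Qed.

Lemma INR_double_S k : INR (2 * k + 1) = 2 * INR k + 1.
Proof. rewrite plus_INR, mult_INR; simpl; ring. Qed.

Section Doubling.

Context {P : nat} {c' f' g' c f g : nat -> nat -> R}.
Hypothesis Hd : doubling P c' f' g' c f g.

Ltac doubling_moment :=
  unfold moment, addf; rewrite sum2_double, <- ?sum2_scal;
  repeat (rewrite <- sum2_plus || rewrite <- sum2_minus);
  apply sum2_ext; intros k l Hk Hl;
  destruct (Hd k l Hk Hl) as (E1&E2&E3&E4&E5&E6&E7&E8&E9&E10&E11&E12&_);
  rewrite ?E1, ?E2, ?E3, ?E4, ?E5, ?E6, ?E7, ?E8, ?E9, ?E10, ?E11, ?E12;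
  unfold w1, wk, wl, wkl, bipoly; rewrite ?INR_double, ?INR_double_S, ?plus_INR; ring.

Lemma double_moment_f1 :
  moment (P + P) f w1 = 2 * moment P f' w1 + sum2 P (bipoly 1 0 0 0 0 0).
Proof. doubling_moment. Qed.

Lemma double_moment_g1 :
  moment (P + P) g w1 = 2 * moment P g' w1 + sum2 P (bipoly 1 0 0 0 0 0).
Proof. doubling_moment. Qed.

Lemma double_moment_fk :
  moment (P + P) f wk = 4 * moment P f' wk + moment P f' w1 + sum2 P (bipoly 0 2 0 0 0 0).
Proof. doubling_moment. Qed.

Lemma double_moment_gk :
  moment (P + P) g wk = 4 * moment P g' wk + moment P g' w1 + sum2 P (bipoly 1 2 0 0 0 0).
Proof. doubling_moment. Qed.

Lemma double_moment_fl :
  moment (P + P) f wl =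
  2 * moment P f' wl + INR P * moment P f' w1 + sum2 P (bipoly (INR P) 0 0 1 0 0).
Proof. doubling_moment. Qed.

Lemma double_moment_gl :
  moment (P + P) g wl =
  2 * moment P g' wl + INR P * moment P g' w1 + sum2 P (bipoly (INR P) 0 0 1 0 0).
Proof. doubling_moment. Qed.

Lemma double_moment_fkl :
  moment (P + P) f wkl =
  4 * moment P f' wkl + 2 * INR P * moment P f' wk + moment P f' wl
  + INR P * moment P f' w1 + sum2 P (bipoly 0 (2 * INR P) 0 0 2 0).
Proof. doubling_moment. Qed.

Lemma double_moment_gkl :
  moment (P + P) g wkl =
  4 * moment P g' wkl + moment P g' wl + 2 * INR P * moment P g' wk
  + sum2 P (bipoly (INR P) (2 * INR P) 0 1 2 0).
Proof. doubling_moment. Qed.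

Lemma double_moment_c1 :
  moment (P + P) c w1 =
  4 * moment P c' w1 - moment P g' w1 - moment P f' w1 + sum2 P (bipoly 3 4 0 0 0 0).
Proof. doubling_moment. Qed.

Lemma double_moment_ck :
  moment (P + P) c wk =
  8 * moment P c' wk + 2 * moment P c' w1 - 2 * moment P f' wk - 2 * moment P g' wk
  + sum2 P (bipoly 2 8 8 0 0 0).
Proof. doubling_moment. Qed.

Lemma double_moment_cl :
  moment (P + P) c wl =
  4 * moment P c' wl + 2 * INR P * moment P c' w1 - moment P g' wl - moment P f' wl
  - INR P * moment P f' w1 + sum2 P (bipoly (3 * INR P) (4 * INR P) 0 3 4 0).
Proof. doubling_moment. Qed.

Lemma double_moment_ckl :
  moment (P + P) c wkl =
  8 * moment P c' wkl + 2 * moment P c' wl + 4 * INR P * moment P c' wk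
  + INR P * moment P c' w1 - 2 * moment P g' wkl - 2 * INR P * moment P f' wk
  - 2 * moment P f' wkl + sum2 P (bipoly (2 * INR P) (8 * INR P) (8 * INR P) 2 8 8).
Proof. doubling_moment. Qed.

Lemma double_moment_cc :
  moment (P + P) c c =
  4 * moment P c' c' - 2 * moment P c' (addf f' g') + 8 * moment P c' wk
  + 6 * moment P c' w1 + moment P g' g' + moment P f' f' - 4 * moment P f' wk
  - 2 * moment P f' w1 + sum2 P (bipoly 5 12 8 0 0 0).
Proof. doubling_moment. Qed.

Lemma double_moment_c_fg :
  moment (P + P) c (addf f g) =
  2 * moment P c' (addf f' g') + 2 * moment P c' w1 - 2 * moment P f' g'
  + 2 * moment P g' wk + moment P g' w1 + 2 * moment P f' wk + moment P f' w1
  + sum2 P (bipoly 3 4 0 0 0 0).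
Proof. doubling_moment. Qed.

Lemma double_moment_fg : moment (P + P) f g = moment P g' w1 + moment P f' w1.
Proof. doubling_moment. Qed.

Lemma doubling_moment_idem : moment P f' f' = moment P f' w1 /\ moment P g' g' = moment P g' w1.
Proof.
  split; apply sum2_ext; intros k l Hk Hl;
  destruct (Hd k l Hk Hl) as (_&_&_&_&_&_&_&_&_&_&_&_&E13&E14); unfold w1; lra.
Qed.

End Doubling.

(* Closed forms of the moments of the count arrays at resolution [n = 2^m]; [o] is the
   number of ones of the shift [sigma]. They were found by solving the recursions above. *)
Definition moments_spec (n : nat) (c f g : nat -> nat -> R) (m o : R) : Prop :=
  let M := INR n in
  moment n c w1 = M^2/2 + M^3/2 /\
  moment n c wk = -M^2/3 + M^4/3 /\
  moment n c wl = -M/12 - M^2/3 + M^3/12 + M^4/3 - m*M^2/8 + o*M^2/4 /\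
  moment n c wkl = M/18 + M^2/6 - 5*M^3/18 - M^4/6 + 2*M^5/9 + m*M^2/8 - o*M^2/4
                   - 5*m*M^3/64 + o*M^3/8 + (m-2*o)^2*M^3/64 /\
  moment n f w1 = M/2 + M^2/2 /\
  moment n f wk = -M/4 + M^3/4 - m*M^2/8 + o*M^2/4 /\
  moment n f wl = -M/3 + M^3/3 /\
  moment n f wkl = M/6 - M^2/6 - M^3/6 + M^4/6 + m*M^2/8 - o*M^2/4 - m*M^3/16 + o*M^3/8 /\
  moment n g w1 = -M/2 + M^2/2 /\
  moment n g wk = M/4 - M^2/2 + M^3/4 + m*M^2/8 - o*M^2/4 /\
  moment n g wl = M/6 - M^2/2 + M^3/3 /\
  moment n g wkl = -M/12 + M^2/3 - 5*M^3/12 + M^4/6 + m*M^3/16 - o*M^3/8.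

Definition square_moments_spec (n : nat) (c f g : nat -> nat -> R) (m o : R) : Prop :=
  let M := INR n in
  moment n c c = -M/6 + 13*M^2/72 + 2*M^3/3 + 4*M^4/9 - 13*m*M^2/48 + o*M^2/2
                 + (m-2*o)^2*M^2/16 /\
  moment n c (addf f g) = -M/6 + 3*M^2/4 + 2*M^3/3 /\
  moment n f g = M^2/4.

Definition doubling_by (s1 : bool) P (c' f' g' c f g : nat -> nat -> R) : Prop :=
  if s1 then doubling P c' g' f' c g f else doubling P c' f' g' c f g.

Ltac expand_doubling H :=
  rewrite ?(double_moment_c1 H), ?(double_moment_ck H), ?(double_moment_cl H),
    ?(double_moment_ckl H), ?(double_moment_f1 H), ?(double_moment_fk H),
    ?(double_moment_fl H), ?(double_moment_fkl H), ?(double_moment_g1 H),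
    ?(double_moment_gk H), ?(double_moment_gl H), ?(double_moment_gkl H),
    ?(double_moment_cc H), ?(double_moment_c_fg H), ?(double_moment_fg H).

Lemma moments_spec_double s1 P c' f' g' c f g m o :
  doubling_by s1 P c' f' g' c f g -> moments_spec P c' f' g' m o ->
  moments_spec (P + P) c f g (m + 1) (o + INR (Nat.b2n s1)).
Proof.
  intros H (a1&a2&a3&a4&a5&a6&a7&a8&a9&a10&a11&a12).
  unfold moments_spec. rewrite plus_INR.
  destruct s1; simpl in H |- *; expand_doubling H;
  rewrite a1, a2, a3, a4, a5, a6, a7, a8, a9, a10, a11, a12, !sum2_bipoly;
  repeat split; field.
Qed.

Lemma square_moments_spec_double s1 P c' f' g' c f g m o :
  doubling_by s1 P c' f' g' c f g -> moments_spec P c' f' g' m o ->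
  square_moments_spec P c' f' g' m o ->
  square_moments_spec (P + P) c f g (m + 1) (o + INR (Nat.b2n s1)).
Proof.
  intros H (a1&a2&a3&a4&a5&a6&a7&a8&a9&a10&a11&a12) (q1&q2&q3).
  unfold square_moments_spec. rewrite plus_INR.
  destruct s1; simpl in H |- *;
    [rewrite (moment_addf_comm _ c f g), (moment_comm _ f g) |];
    expand_doubling H;
    [rewrite <- (moment_addf_comm _ c' f' g'), <- (moment_comm _ f' g') |];
    destruct (doubling_moment_idem H) as [i1 i2];
    rewrite i1, i2, q1, q2, q3, ?a1, ?a2, ?a3, ?a4, ?a5, ?a6, ?a7, ?a8, ?a9, ?a10, ?a11, ?a12,
      !sum2_bipoly;
    repeat split; field.
Qed.

Fixpoint xidx (t : list bool) : nat :=
  match t with [] => 0%nat | b :: t' => (Nat.b2n b + 2 * xidx t')%nat end.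

Fixpoint yidx (s t : list bool) : nat :=
  match s, t with
  | s1 :: s', b :: t' => (Nat.b2n (xorb b s1) * 2 ^ length t' + yidx s' t')%nat
  | _, _ => 0%nat
  end.

Definition lsum {A : Type} (L : list A) (h : A -> nat) : nat :=
  fold_right (fun t acc => (h t + acc)%nat) 0%nat L.

Lemma lsum_app {A} (L1 L2 : list A) h : lsum (L1 ++ L2) h = (lsum L1 h + lsum L2 h)%nat.
Proof. induction L1; simpl; auto. rewrite IHL1; lia. Qed.

Lemma lsum_map {A B} (L : list A) (f : A -> B) h : lsum (map f L) h = lsum L (fun t => h (f t)).
Proof. induction L; simpl; auto. Qed.

Lemma lsum_plus {A} (L : list A) h1 h2 :
  lsum L (fun t => h1 t + h2 t)%nat = (lsum L h1 + lsum L h2)%nat.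
Proof. induction L; simpl; auto. rewrite IHL; lia. Qed.

Lemma lsum0 {A} (L : list A) : lsum L (fun _ => 0%nat) = 0%nat.
Proof. induction L; simpl; auto. Qed.

Lemma lsum_ext {A} (L : list A) h1 h2 :
  (forall t, In t L -> h1 t = h2 t) -> lsum L h1 = lsum L h2.
Proof. intros H; induction L; simpl in *; auto. Qed.

Lemma lsum_le {A} (L : list A) h1 h2 :
  (forall t, In t L -> (h1 t <= h2 t)%nat) -> (lsum L h1 <= lsum L h2)%nat.
Proof. intros H; induction L; simpl in *; auto. apply Nat.add_le_mono; auto. Qed.

Lemma length_filter_map {A B} (p : B -> bool) (f : A -> B) (L : list A) :
  length (filter p (map f L)) = lsum L (fun t => Nat.b2n (p (f t))).
Proof. induction L; simpl; auto. destruct (p (f a)); simpl; auto. Qed.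

Lemma lsum_all_bits_S m h :
  lsum (all_bits (S m)) h = lsum (all_bits m) (fun t => h (false :: t) + h (true :: t))%nat.
Proof. simpl. rewrite lsum_app, !lsum_map, lsum_plus. reflexivity. Qed.

Lemma in_all_bits_length m t : In t (all_bits m) -> length t = m.
Proof.
  revert t; induction m; simpl; intros t H.
  - destruct H as [<-|[]]; reflexivity.
  - apply in_app_or in H; destruct H as [H|H]; apply in_map_iff in H;
      destruct H as (u&<-&Hu); simpl; rewrite (IHm u Hu); auto.
Qed.

Lemma all_bits_length m : length (all_bits m) = (2 ^ m)%nat.
Proof. induction m; simpl; auto. rewrite length_app, !length_map, IHm. lia. Qed.

Lemma xidx_lt t : (xidx t < 2 ^ length t)%nat.
Proof. induction t; simpl; auto. destruct a; simpl; lia. Qed.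

Lemma yidx_lt s t : (yidx s t < 2 ^ length t)%nat.
Proof.
  revert s; induction t as [|b t IH]; intros [|s1 s]; simpl; try lia;
    pose proof (Nat.pow_nonzero 2 (length t) ltac:(lia)); try lia.
  specialize (IH s). destruct (xorb b s1); simpl; lia.
Qed.

Ltac case_nat_cmps := repeat match goal with
  | |- context [Nat.leb ?a ?b] => destruct (Nat.leb_spec a b)
  | |- context [Nat.ltb ?a ?b] => destruct (Nat.ltb_spec a b)
  | |- context [Nat.eqb ?a ?b] => destruct (Nat.eqb_spec a b) end; simpl; lia.

Lemma lsum_xidx_lt m k : (k <= 2 ^ m)%nat ->
  lsum (all_bits m) (fun t => Nat.b2n (xidx t <? k)) = k.
Proof.
  revert k; induction m; intros k Hk.
  - simpl in Hk |- *. destruct k as [|[|]]; simpl; lia.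
  - rewrite lsum_all_bits_S. simpl xidx.
    destruct (Nat.Even_or_Odd k) as [[j ->]|[j ->]]; simpl in Hk.
    + rewrite (lsum_ext _ _ (fun t => Nat.b2n (xidx t <? j) + Nat.b2n (xidx t <? j))%nat).
      * rewrite lsum_plus, IHm; lia.
      * intros; case_nat_cmps.
    + rewrite (lsum_ext _ _ (fun t => Nat.b2n (xidx t <? S j) + Nat.b2n (xidx t <? j))%nat).
      * rewrite lsum_plus, !IHm; lia.
      * intros; case_nat_cmps.
Qed.

Lemma lsum_xidx_le m k : (k < 2 ^ m)%nat ->
  lsum (all_bits m) (fun t => Nat.b2n (xidx t <=? k)) = S k.
Proof.
  intros Hk. rewrite <- (lsum_xidx_lt m (S k)) by lia. apply lsum_ext; intros; case_nat_cmps.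
Qed.

Lemma lsum_xidx_eq m k : (k < 2 ^ m)%nat ->
  lsum (all_bits m) (fun t => Nat.b2n (xidx t =? k)) = 1%nat.
Proof.
  intros Hk.
  assert (E : lsum (all_bits m) (fun t => Nat.b2n (xidx t <? S k)) =
     (lsum (all_bits m) (fun t => Nat.b2n (xidx t =? k))
      + lsum (all_bits m) (fun t => Nat.b2n (xidx t <? k)))%nat).
  { rewrite <- lsum_plus. apply lsum_ext; intros; case_nat_cmps. }
  rewrite !lsum_xidx_lt in E; lia.
Qed.

(* The point with digits [t] lies in grid cell (xidx t, yidx s t) and its reflection in
   (xidx t, 2^m - yidx s t), so [box_count m s k l] counts the points of the symmetrized
   set in the cells (k', l') with k' <= k and l' <= l. *)
Definition box_ind m s k l t :=
  (Nat.b2n (xidx t <=? k) * (Nat.b2n (yidx s t <=? l) + Nat.b2n (2^m - yidx s t <=? l)))%nat.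
Definition col_ind s k l t := (Nat.b2n (xidx t =? k) * Nat.b2n (yidx s t <=? l))%nat.
Definition col_refl_ind m s k l t :=
  (Nat.b2n (xidx t =? k) * Nat.b2n (2^m - yidx s t <=? l))%nat.

Definition box_count m s k l := lsum (all_bits m) (box_ind m s k l).
Definition col_count m s k l := lsum (all_bits m) (col_ind s k l).
Definition col_refl_count m s k l := lsum (all_bits m) (col_refl_ind m s k l).

Ltac decide_nat_cmps := repeat match goal with
 | |- context [Nat.leb ?a ?b] =>
     first [ rewrite (proj2 (Nat.leb_le a b)) by lia | rewrite (proj2 (Nat.leb_gt a b)) by lia ]
 | |- context [Nat.ltb ?a ?b] =>
     first [ rewrite (proj2 (Nat.ltb_lt a b)) by lia | rewrite (proj2 (Nat.ltb_ge a b)) by lia ]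
 | |- context [Nat.eqb ?a ?b] =>
     first [ rewrite (proj2 (Nat.eqb_eq a b)) by lia | rewrite (proj2 (Nat.eqb_neq a b)) by lia ]
 end; simpl; lia.

Ltac pointwise_count m s k l :=
  apply lsum_ext; intros t Ht; pose proof (in_all_bits_length _ _ Ht) as Hlen;
  pose proof (xidx_lt t) as HX; pose proof (yidx_lt s t) as HY; rewrite Hlen in HX, HY;
  unfold box_ind, col_ind, col_refl_ind; cbn [xidx yidx]; rewrite ?Hlen, ?Nat.pow_succ_r';
  set (P := (2 ^ m)%nat) in *; set (X := xidx t) in *; set (Y := yidx s t) in *;
  destruct (Nat.lt_total X k) as [?|[?|?]];
  destruct (Nat.le_gt_cases Y l); destruct (Nat.le_gt_cases (P - Y) l);
  cbn [xorb Nat.b2n]; decide_nat_cmps.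

Section CountDoubling.

Variables (m : nat) (s : list bool) (s1 : bool) (k l : nat).
Hypotheses (Hk : (k < 2 ^ m)%nat) (Hl : (l < 2 ^ m)%nat).

Lemma box_count_even_low :
  (box_count (S m) (s1 :: s) (2 * k) l
   + (if s1 then col_count m s k l else col_refl_count m s k l) = box_count m s k l)%nat.
Proof.
  unfold box_count, col_count, col_refl_count. rewrite lsum_all_bits_S.
  destruct s1; rewrite <- lsum_plus; pointwise_count m s k l.
Qed.

Lemma box_count_odd_low : box_count (S m) (s1 :: s) (2 * k + 1) l = box_count m s k l.
Proof. unfold box_count. rewrite lsum_all_bits_S. destruct s1; pointwise_count m s k l. Qed.

Lemma box_count_even_high :
  (box_count (S m) (s1 :: s) (2 * k) (2 ^ m + l)
   + (if s1 then col_refl_count m s k l else col_count m s k l)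
   = box_count m s k l + S k + k)%nat.
Proof.
  transitivity (box_count m s k l + lsum (all_bits m) (fun t => Nat.b2n (xidx t <=? k))
     + lsum (all_bits m) (fun t => Nat.b2n (xidx t <? k)))%nat;
    [| rewrite lsum_xidx_le, lsum_xidx_lt; lia].
  unfold box_count, col_count, col_refl_count. rewrite lsum_all_bits_S.
  destruct s1; rewrite <- !lsum_plus; pointwise_count m s k l.
Qed.

Lemma box_count_odd_high :
  (box_count (S m) (s1 :: s) (2 * k + 1) (2 ^ m + l) = box_count m s k l + S k + S k)%nat.
Proof.
  transitivity (box_count m s k l + lsum (all_bits m) (fun t => Nat.b2n (xidx t <=? k))
     + lsum (all_bits m) (fun t => Nat.b2n (xidx t <=? k)))%nat;
    [| rewrite lsum_xidx_le; lia].
  unfold box_count. rewrite lsum_all_bits_S.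
  destruct s1; rewrite <- !lsum_plus; pointwise_count m s k l.
Qed.

Ltac col_count_case :=
  first [ transitivity (lsum (all_bits m) (fun _ => 0%nat));
            [pointwise_count m s k l | apply lsum0]
        | transitivity (lsum (all_bits m) (fun t => Nat.b2n (xidx t =? k)));
            [pointwise_count m s k l | apply lsum_xidx_eq; lia]
        | unfold col_count, col_refl_count; pointwise_count m s k l ].

Lemma col_count_even_low :
  col_count (S m) (s1 :: s) (2 * k) l = if s1 then 0%nat else col_count m s k l.
Proof. unfold col_count at 1. rewrite lsum_all_bits_S. destruct s1; col_count_case. Qed.

Lemma col_count_odd_low :
  col_count (S m) (s1 :: s) (2 * k + 1) l = if s1 then col_count m s k l else 0%nat.
Proof. unfold col_count at 1. rewrite lsum_all_bits_S. destruct s1; col_count_case. Qed.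

Lemma col_count_even_high :
  col_count (S m) (s1 :: s) (2 * k) (2 ^ m + l) = if s1 then col_count m s k l else 1%nat.
Proof. unfold col_count at 1. rewrite lsum_all_bits_S. destruct s1; col_count_case. Qed.

Lemma col_count_odd_high :
  col_count (S m) (s1 :: s) (2 * k + 1) (2 ^ m + l) = if s1 then 1%nat else col_count m s k l.
Proof. unfold col_count at 1. rewrite lsum_all_bits_S. destruct s1; col_count_case. Qed.

Lemma col_refl_count_even_low :
  col_refl_count (S m) (s1 :: s) (2 * k) l = if s1 then col_refl_count m s k l else 0%nat.
Proof. unfold col_refl_count at 1. rewrite lsum_all_bits_S. destruct s1; col_count_case. Qed.

Lemma col_refl_count_odd_low :
  col_refl_count (S m) (s1 :: s) (2 * k + 1) l = if s1 then 0%nat else col_refl_count m s k l.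
Proof. unfold col_refl_count at 1. rewrite lsum_all_bits_S. destruct s1; col_count_case. Qed.

Lemma col_refl_count_even_high :
  col_refl_count (S m) (s1 :: s) (2 * k) (2 ^ m + l) = if s1 then 1%nat else col_refl_count m s k l.
Proof. unfold col_refl_count at 1. rewrite lsum_all_bits_S. destruct s1; col_count_case. Qed.

Lemma col_refl_count_odd_high :
  col_refl_count (S m) (s1 :: s) (2 * k + 1) (2 ^ m + l) = if s1 then col_refl_count m s k l else 1%nat.
Proof. unfold col_refl_count at 1. rewrite lsum_all_bits_S. destruct s1; col_count_case. Qed.

Lemma col_count_le1 : (col_count m s k l <= 1)%nat.
Proof.
  rewrite <- (lsum_xidx_eq m k Hk). apply lsum_le; intros t _; unfold col_ind.
  destruct (xidx t =? k), (yidx s t <=? l); simpl; lia.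
Qed.

Lemma col_refl_count_le1 : (col_refl_count m s k l <= 1)%nat.
Proof.
  rewrite <- (lsum_xidx_eq m k Hk). apply lsum_le; intros t _; unfold col_refl_ind.
  destruct (xidx t =? k), (2 ^ m - yidx s t <=? l); simpl; lia.
Qed.

End CountDoubling.

Definition boxR m s (k l : nat) : R := INR (box_count m s k l).
Definition colR m s (k l : nat) : R := INR (col_count m s k l).
Definition col_reflR m s (k l : nat) : R := INR (col_refl_count m s k l).

Lemma INR_idem n : (n <= 1)%nat -> INR n * INR n = INR n.
Proof. intros H. destruct n as [|[|n]]; simpl; try ring; lia. Qed.

Lemma doubling_counts m s s1 :
  doubling_by s1 (2 ^ m) (boxR m s) (colR m s) (col_reflR m s)
    (boxR (S m) (s1 :: s)) (colR (S m) (s1 :: s)) (col_reflR (S m) (s1 :: s)).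
Proof.
  unfold doubling_by, boxR, colR, col_reflR.
  pose proof (box_count_even_low m s s1) as E1.
  pose proof (box_count_even_high m s s1) as E3.
  pose proof (box_count_odd_high m s s1) as E4.
  destruct s1; intros k l Hk Hl;
    specialize (E1 k l Hk Hl); specialize (E3 k l Hk Hl); specialize (E4 k l Hk Hl);
    apply (f_equal INR) in E1, E3, E4;
    rewrite plus_INR in E1; repeat rewrite ?plus_INR, ?S_INR in E3;
    repeat rewrite ?plus_INR, ?S_INR in E4;
    rewrite box_count_odd_low, col_count_even_low, col_count_odd_low, col_count_even_high,
      col_count_odd_high, col_refl_count_even_low, col_refl_count_odd_low,
      col_refl_count_even_high, col_refl_count_odd_high by assumption;
    cbn [INR]; repeat split; try lra;
    apply INR_idem; first [apply col_count_le1 | apply col_refl_count_le1]; assumption.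
Qed.

Fixpoint ones (s : list bool) : nat :=
  match s with [] => 0%nat | b :: s' => (ones s' + Nat.b2n b)%nat end.

Lemma INR_pow2 m : INR (2 ^ m) = 2 ^ m.
Proof. rewrite pow_INR. reflexivity. Qed.

Lemma moments_spec_counts s :
  moments_spec (2 ^ length s) (boxR (length s) s) (colR (length s) s) (col_reflR (length s) s)
    (INR (length s)) (INR (ones s)).
Proof.
  induction s as [|s1 s IH].
  - unfold moments_spec, moment, sum2, w1, wk, wl, wkl, boxR, colR, col_reflR.
    simpl. repeat split; field.
  - cbn [length ones]. rewrite Nat.pow_succ_r', S_INR, plus_INR.
    replace (2 * 2 ^ length s)%nat with (2 ^ length s + 2 ^ length s)%nat by lia.
    exact (moments_spec_double s1 _ _ _ _ _ _ _ _ _ (doubling_counts _ _ _) IH).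
Qed.

Lemma square_moments_spec_counts s1 s :
  square_moments_spec (2 ^ length (s1 :: s)) (boxR (length (s1 :: s)) (s1 :: s))
    (colR (length (s1 :: s)) (s1 :: s)) (col_reflR (length (s1 :: s)) (s1 :: s))
    (INR (length (s1 :: s))) (INR (ones (s1 :: s))).
Proof.
  revert s1; induction s as [|s2 s IH]; intros s1.
  (* the closed form only holds from m = 1 on, where it is checked by computation *)
  - unfold square_moments_spec, moment, sum2, addf, boxR, colR, col_reflR.
    destruct s1; simpl; repeat split; field.
  - set (s' := s2 :: s) in *.
    change (length (s1 :: s')) with (S (length s')). cbn [ones].
    rewrite Nat.pow_succ_r', S_INR, plus_INR.
    replace (2 * 2 ^ length s')%nat with (2 ^ length s' + 2 ^ length s')%nat by lia.
    exact (square_moments_spec_double s1 _ _ _ _ _ _ _ _ _ (doubling_counts _ _ _)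
             (moments_spec_counts s') (IH s2)).
Qed.

Lemma fold_map_ext (f g : nat -> R) L : (forall j, In j L -> f j = g j) ->
  fold_right Rplus 0 (map f L) = fold_right Rplus 0 (map g L).
Proof. intros H. f_equal. apply map_ext_in. auto. Qed.

Lemma fold_map_scal (f : nat -> R) a L :
  fold_right Rplus 0 (map (fun j => f j * a) L) = fold_right Rplus 0 (map f L) * a.
Proof. induction L; simpl; [ring | rewrite IHL; ring]. Qed.

Lemma seq1_S m : seq 1 (S m) = 1%nat :: map S (seq 1 m).
Proof. simpl. rewrite seq_shift. reflexivity. Qed.

Lemma b2R_b2n b : b2R b = INR (Nat.b2n b).
Proof. destruct b; reflexivity. Qed.

Lemma hx_xidx t : hx (length t) t = INR (xidx t) / 2 ^ length t.
Proof.
  induction t as [|b t IH]; [unfold hx; simpl; field|].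
  unfold hx in *. cbn [length]. rewrite seq1_S, map_cons, map_map. cbn [fold_right].
  rewrite (fold_map_ext _ (fun j => b2R (bit t j) / 2 ^ (length t + 1 - j))).
  - rewrite IH. cbn [xidx]. rewrite plus_INR, mult_INR, <- b2R_b2n. unfold bit. simpl nth.
    simpl pow. rewrite Nat.sub_0_r, Nat.add_1_r. simpl pow. simpl INR. field. apply pow_nonzero; lra.
  - intros j Hj. apply in_seq in Hj. unfold bit.
    replace (S j - 1)%nat with (S (j - 1)) by lia.
    replace (S (length t) + 1 - S j)%nat with (length t + 1 - j)%nat by lia. reflexivity.
Qed.

Lemma hy_yidx s t : length s = length t -> hy (length t) s t = INR (yidx s t) / 2 ^ length t.
Proof.
  revert s. induction t as [|b t IH]; intros s Hs; [unfold hy; destruct s; simpl; field|].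
  destruct s as [|s1 s]; [discriminate|]. injection Hs as Hs.
  unfold hy in *. cbn [length]. rewrite seq1_S, map_cons, map_map. cbn [fold_right].
  rewrite (fold_map_ext _ (fun j => b2R (xorb (bit t j) (bit s j)) / 2 ^ j * / 2)).
  - rewrite fold_map_scal, IH by auto. cbn [yidx].
    rewrite plus_INR, mult_INR, pow_INR, <- b2R_b2n. unfold bit. simpl nth.
    simpl pow. simpl INR. replace (1 + 1) with 2 by ring. field. apply pow_nonzero; lra.
  - intros j Hj. apply in_seq in Hj. unfold bit.
    replace (S j - 1)%nat with (S (j - 1)) by lia. cbn [nth pow]. field.
    apply pow_nonzero; lra.
Qed.

Lemma hammersley_sym_length m s : length (hammersley_sym m s) = (2 ^ S m)%nat.
Proof.
  unfold hammersley_sym, hammersley.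
  rewrite length_app, !length_map, all_bits_length. simpl. lia.
Qed.

Lemma grid_lt_iff n k u M : 0 < M -> INR k < u * M < INR k + 1 ->
  (INR n / M < u <-> (n <=? k)%nat = true).
Proof.
  intros HM Hu. rewrite Nat.leb_le. split; intros H.
  - assert (INR n < INR (S k)).
    { rewrite S_INR. apply Rmult_lt_compat_r with (r := M) in H; auto.
      replace (INR n / M * M) with (INR n) in H by (field; lra). lra. }
    apply INR_lt in H0. lia.
  - apply le_INR in H. apply Rmult_lt_reg_r with M; auto.
    replace (INR n / M * M) with (INR n) by (field; lra). lra.
Qed.

Lemma in_box_dec x a y b (p q : bool) : (x < a <-> p = true) -> (y < b <-> q = true) ->
  (if Rlt_dec x a then if Rlt_dec y b then true else false else false) = (p && q)%bool.
Proof.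
  intros H1 H2. destruct (Rlt_dec x a) as [h1|h1], (Rlt_dec y b) as [h2|h2], p, q;
    simpl; auto; exfalso; intuition congruence.
Qed.

Lemma count_box_on_cell m s k l a b : length s = m ->
  INR k < a * 2 ^ m < INR k + 1 -> INR l < b * 2 ^ m < INR l + 1 ->
  count_box (hammersley_sym m s) a b = box_count m s k l.
Proof.
  intros Hs Ha Hb. assert (HM : 0 < 2 ^ m) by (apply pow_lt; lra).
  unfold count_box, hammersley_sym, hammersley.
  rewrite filter_app, length_app, map_map, !length_filter_map, <- lsum_plus.
  apply lsum_ext. intros t Ht. pose proof (in_all_bits_length _ _ Ht) as Hlen.
  assert (E1 : hx m t = INR (xidx t) / 2 ^ m) by (rewrite <- Hlen; apply hx_xidx).
  assert (E2 : hy m s t = INR (yidx s t) / 2 ^ m) by (rewrite <- Hlen; apply hy_yidx; lia).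
  pose proof (yidx_lt s t) as HY. rewrite Hlen in HY.
  assert (E3 : 1 - INR (yidx s t) / 2 ^ m = INR (2 ^ m - yidx s t) / 2 ^ m).
  { rewrite minus_INR, INR_pow2 by lia. field. lra. }
  cbn [fst snd]. rewrite E1, E2, E3.
  rewrite !(in_box_dec _ _ _ _ (xidx t <=? k)%nat _ (grid_lt_iff _ _ _ _ HM Ha)
              (grid_lt_iff _ _ _ _ HM Hb)).
  unfold box_ind. destruct (xidx t <=? k)%nat, (yidx s t <=? l)%nat, (2 ^ m - yidx s t <=? l)%nat;
    reflexivity.
Qed.

Definition quad_integral (A B C x0 x1 : R) : R :=
  A * (x1 - x0) + B * (x1 * x1 - x0 * x0) / 2 + C * (x1 * x1 * x1 - x0 * x0 * x0) / 3.

Lemma is_RInt_quad A B C x0 x1 :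
  is_RInt (fun x => A + B * x + C * (x * x)) x0 x1 (quad_integral A B C x0 x1).
Proof.
  set (F := fun x => A * x + B * (x * x) / 2 + C * (x * x * x) / 3).
  replace (quad_integral A B C x0 x1) with (minus (F x1) (F x0))
    by (unfold minus, plus, opp, F, quad_integral; simpl; field).
  apply (is_RInt_derive F).
  - intros x _. unfold F. auto_derive; auto. field.
  - intros x _. apply (ex_derive_continuous (K := R_AbsRing) (V := R_NormedModule)).
    auto_derive. auto.
Qed.

Lemma is_RInt_sumR n (F : nat -> R -> R) (v : nat -> R) x0 x1 :
  (forall k, (k < n)%nat -> is_RInt (F k) x0 x1 (v k)) ->
  is_RInt (fun x => sumR n (fun k => F k x)) x0 x1 (sumR n v).
Proof.
  induction n; intros H; simpl.
  - apply (is_RInt_ext (fun _ => zero)); [reflexivity|].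
    replace 0 with (scal (x1 - x0) (@zero R_NormedModule))
      by (unfold scal, zero; simpl; unfold mult; simpl; ring).
    apply is_RInt_const.
  - apply (is_RInt_plus (fun x => sumR n (fun k => F k x)) (F n));
      [apply IHn; intros |]; apply H; lia.
Qed.

Lemma is_RInt_piecewise (f : R -> R) (n : nat) (M : R) (g : nat -> R -> R) (v : nat -> R) :
  0 < M ->
  (forall k x, (k < n)%nat -> INR k / M < x < (INR k + 1) / M -> f x = g k x) ->
  (forall k, (k < n)%nat -> is_RInt (g k) (INR k / M) ((INR k + 1) / M) (v k)) ->
  is_RInt f 0 (INR n / M) (sumR n v).
Proof.
  intros HM. induction n; intros Hf Hg.
  - simpl. unfold Rdiv. rewrite Rmult_0_l. exact (is_RInt_point (V := R_NormedModule) f 0).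
  - rewrite sumR_S, S_INR. change (sumR n v + v n) with (plus (sumR n v) (v n)).
    apply (is_RInt_Chasles (V := R_NormedModule) f 0 (INR n / M)).
    + apply IHn; intros; [apply Hf | apply Hg]; auto; lia.
    + apply (is_RInt_ext (g n)); [|apply Hg; lia].
      intros x Hx. assert (INR n / M <= (INR n + 1) / M).
      { apply Rmult_le_compat_r; [left; apply Rinv_0_lt_compat|]; lra. }
      rewrite Rmin_left, Rmax_right in Hx by lra. symmetry; apply Hf; auto.
Qed.

Lemma grid_cell_scale k x M : 0 < M -> INR k / M < x < (INR k + 1) / M ->
  INR k < x * M < INR k + 1.
Proof.
  intros HM [H1 H2]. split.
  - apply Rmult_lt_compat_r with (r := M) in H1; auto.
    replace (INR k / M * M) with (INR k) in H1 by (field; lra). auto.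
  - apply Rmult_lt_compat_r with (r := M) in H2; auto.
    replace ((INR k + 1) / M * M) with (INR k + 1) in H2 by (field; lra). auto.
Qed.

(* On the cell [k/M, (k+1)/M) x [l/M, (l+1)/M) the local discrepancy of a set of [2M]
   points is [c - 2M a b] with [c] constant; these are the two iterated integrals of its square. *)
Definition row_integral (M c : R) (k : nat) (b : R) : R :=
  quad_integral (c * c) (-2 * c * (2 * M) * b) ((2 * M) * (2 * M) * (b * b))
    (INR k / M) ((INR k + 1) / M).

Definition cell_integral (M c : R) (k l : nat) : R :=
  let x0 := INR k / M in let x1 := (INR k + 1) / M in
  quad_integral (c * c * (x1 - x0)) (- c * (2 * M) * (x1 * x1 - x0 * x0))
    ((2 * M) * (2 * M) * (x1 * x1 * x1 - x0 * x0 * x0) / 3) (INR l / M) ((INR l + 1) / M).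

Lemma is_RInt_row_integral M c k l : M <> 0 ->
  is_RInt (row_integral M c k) (INR l / M) ((INR l + 1) / M) (cell_integral M c k l).
Proof.
  intros HM. eapply is_RInt_ext; [|apply is_RInt_quad].
  intros b _. unfold row_integral, quad_integral. simpl. field. exact HM.
Qed.

Section DiscrepancyIntegral.

Variables (m : nat) (s : list bool).
Hypothesis Hs : length s = m.

Let D a b := Rabs (local_disc (hammersley_sym m s) a b) ^ 2.

Lemma pow2_pos : 0 < 2 ^ m.
Proof. apply pow_lt; lra. Qed.

Lemma is_RInt_grid (f : R -> R) (g : nat -> R -> R) (v : nat -> R) :
  (forall k x, (k < 2 ^ m)%nat -> INR k / 2 ^ m < x < (INR k + 1) / 2 ^ m -> f x = g k x) ->
  (forall k, (k < 2 ^ m)%nat -> is_RInt (g k) (INR k / 2 ^ m) ((INR k + 1) / 2 ^ m) (v k)) ->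
  is_RInt f 0 1 (sumR (2 ^ m) v).
Proof.
  intros Hf Hg. pose proof (is_RInt_piecewise f _ _ g v pow2_pos Hf Hg) as H.
  rewrite INR_pow2, Rdiv_diag in H by (apply pow_nonzero; lra). exact H.
Qed.

Lemma RInt_disc_sq_row l b : (l < 2 ^ m)%nat -> INR l / 2 ^ m < b < (INR l + 1) / 2 ^ m ->
  RInt (fun a => D a b) 0 1 = sumR (2 ^ m) (fun k => row_integral (2 ^ m) (boxR m s k l) k b).
Proof.
  intros Hl Hb. apply grid_cell_scale in Hb; [|exact pow2_pos].
  apply is_RInt_unique.
  apply (is_RInt_grid _
    (fun k a => boxR m s k l * boxR m s k l + (-2 * boxR m s k l * (2 * 2 ^ m) * b) * a
                + ((2 * 2 ^ m) * (2 * 2 ^ m) * (b * b)) * (a * a)));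
    [| intros; apply is_RInt_quad].
  intros k a Hk Ha. apply grid_cell_scale in Ha; [|exact pow2_pos].
  unfold D, local_disc. rewrite pow2_abs, hammersley_sym_length, (count_box_on_cell m s k l a b),
    INR_pow2 by assumption.
  unfold boxR. simpl. ring.
Qed.

Lemma is_RInt_disc_sq :
  is_RInt (fun b => RInt (fun a => D a b) 0 1) 0 1
    (sum2 (2 ^ m) (fun k l => cell_integral (2 ^ m) (boxR m s k l) k l)).
Proof.
  apply (is_RInt_grid _
    (fun l b => sumR (2 ^ m) (fun k => row_integral (2 ^ m) (boxR m s k l) k b)));
    [intros; apply RInt_disc_sq_row; auto |].
  intros l Hl. apply is_RInt_sumR. intros k _.
  apply is_RInt_row_integral, Rgt_not_eq, pow2_pos.
Qed.

End DiscrepancyIntegral.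

Lemma sum2_cell_integral n (c : nat -> nat -> R) : (0 < n)%nat ->
  sum2 n (fun k l => cell_integral (INR n) (c k l) k l) =
  moment n c c / INR n ^ 2
  - (4 * moment n c wkl + 2 * moment n c wk + 2 * moment n c wl + moment n c w1) / INR n ^ 3
  + 4 * INR n ^ 2 / 9.
Proof.
  intros Hn. assert (HM : 0 < INR n) by (apply lt_0_INR; auto).
  set (cube := fun k : nat => 3 * (INR k * INR k) + 3 * INR k + 1).
  transitivity (sum2 n (fun k l => / INR n ^ 2 * (c k l * c k l)
     - 4 / INR n ^ 3 * (c k l * wkl k l) - 2 / INR n ^ 3 * (c k l * wk k l)
     - 2 / INR n ^ 3 * (c k l * wl k l) - 1 / INR n ^ 3 * (c k l * w1 k l)
     + 4 / (9 * INR n ^ 4) * (cube k * cube l))).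
  { apply sum2_ext; intros k l _ _.
    unfold cell_integral, quad_integral, cube, w1, wk, wl, wkl. field. lra. }
  rewrite sum2_plus, !sum2_minus, !sum2_scal, sum2_prod.
  unfold cube. rewrite sumR_cube_telescope. unfold moment. field. lra.
Qed.

Definition disc_sq_integral (P : list point) : R :=
  RInt (fun b => RInt (fun a => Rabs (local_disc P a b) ^ 2) 0 1) 0 1.

Lemma disc_integral_moments m s : length s = m ->
  disc_sq_integral (hammersley_sym m s) =
  let c := boxR m s in
  moment (2 ^ m) c c / (2 ^ m) ^ 2
  - (4 * moment (2 ^ m) c wkl + 2 * moment (2 ^ m) c wk + 2 * moment (2 ^ m) c wl
     + moment (2 ^ m) c w1) / (2 ^ m) ^ 3
  + 4 * (2 ^ m) ^ 2 / 9.
Proof.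
  intros Hs. unfold disc_sq_integral. apply is_RInt_unique.
  rewrite <- INR_pow2, <- sum2_cell_integral by (apply Nat.neq_0_lt_0, Nat.pow_nonzero; lia).
  rewrite INR_pow2. exact (is_RInt_disc_sq m s Hs).
Qed.

Lemma disc_integral_level0 :
  disc_sq_integral (hammersley_sym 0 []) = 4 / 9.
Proof.
  rewrite disc_integral_moments by reflexivity.
  unfold moment, sum2, boxR, w1, wk, wl, wkl. simpl. field.
Qed.

Lemma disc_integral_closed_form s1 s :
  let m := length (s1 :: s) in let M := 2 ^ m in
  disc_sq_integral (hammersley_sym m (s1 :: s)) =
  (INR m + 1) / 24 + 7 / 12 - INR m / (4 * M) - 1 / (18 * M * M)
  + INR (ones (s1 :: s)) / (2 * M).
Proof.
  intros m M. rewrite disc_integral_moments by reflexivity.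
  pose proof (moments_spec_counts (s1 :: s)) as (a1&a2&a3&a4&_).
  pose proof (square_moments_spec_counts s1 s) as (q1&_&_).
  fold m in a1, a2, a3, a4, q1 |- *.
  rewrite INR_pow2 in a1, a2, a3, a4, q1. cbv zeta. rewrite a1, a2, a3, a4, q1.
  fold M. assert (0 < M) by (apply pow_lt; lra). field. lra.
Qed.

Lemma closed_form_near (M m o : R) : 2 <= M -> 0 <= o <= m -> m <= M ->
  let x := (m + 1) / 24 + 7 / 12 - m / (4 * M) - 1 / (18 * M * M) + o / (2 * M) in
  0 <= x /\ Rabs (x - (m + 1) / 24) <= 2.
Proof.
  intros HM Ho Hm x.
  assert (Hunit : forall y, 0 <= y <= M -> 0 <= y / M <= 1).
  { intros y Hy. rewrite <- Rdiv_le_1 by lra. split; [apply Rdiv_le_0_compat|]; lra. }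
  pose proof (Hunit m ltac:(lra)). pose proof (Hunit o ltac:(lra)).
  assert (0 <= 1 / (M * M) <= 1)
    by (rewrite <- Rdiv_le_1 by nra; split; [apply Rdiv_le_0_compat|]; nra).
  replace x with ((m + 1) / 24 + 7 / 12 - m / M / 4 - 1 / (M * M) / 18 + o / M / 2)
    by (unfold x; field; lra).
  split; [|apply Rabs_le]; lra.
Qed.

Lemma ones_le s : (ones s <= length s)%nat.
Proof. induction s as [|[] s]; simpl; lia. Qed.

Lemma disc_integral_near m s : length s = m ->
  let I := disc_sq_integral (hammersley_sym m s) in
  0 <= I /\ Rabs (I - (INR m + 1) / 24) <= 2.
Proof.
  intros <- I. unfold I. destruct s as [|s1 s].
  - cbn [length]. rewrite disc_integral_level0. simpl. split; [|apply Rabs_le]; lra.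
  - rewrite disc_integral_closed_form. apply closed_form_near.
    + apply Rle_trans with (2 ^ 1); [simpl; lra | apply Rle_pow; [lra | simpl; lia]].
    + split; [apply pos_INR | apply le_INR, ones_le].
    + rewrite <- INR_pow2. apply le_INR, Nat.lt_le_incl, Nat.pow_gt_lin_r. lia.
Qed.

Lemma sqrt_diff_bound x a : 0 <= x -> 1 / 25 <= a -> Rabs (x - a) <= 2 ->
  Rabs (sqrt x - sqrt a) <= 10.
Proof.
  intros Hx Ha Hd.
  assert (Hsa : 1 / 5 <= sqrt a).
  { rewrite <- (sqrt_square (1 / 5)) by lra. apply sqrt_le_1_alt. lra. }
  pose proof (sqrt_pos x) as Hsx.
  assert (E : sqrt x - sqrt a = (x - a) / (sqrt x + sqrt a)).
  { field_simplify_eq; [|lra]. rewrite <- !Rsqr_pow2, !Rsqr_sqrt; lra. }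
  rewrite E, Rabs_div, (Rabs_right (sqrt x + sqrt a)) by lra.
  apply Rle_trans with (2 / (1 / 5)); [|lra].
  apply Rmult_le_compat; auto using Rabs_pos.
  - left; apply Rinv_0_lt_compat; lra.
  - apply Rinv_le_contravar; lra.
Qed.

Theorem corollary1 :
  exists C : R, C > 0 /\
    forall (m : nat) (sigma : list bool), length sigma = m ->
      let N := 2 ^ (m + 1) in
      Rabs (L2_disc (hammersley_sym m sigma) - / N * sqrt (ln N / (24 * ln 2)))
        <= C / N.
Proof.
  exists 10. split; [lra|]. intros m s Hs N.
  assert (HN : 0 < N) by (apply pow_lt; lra).
  assert (Hlog : ln N / (24 * ln 2) = (INR m + 1) / 24).
  { assert (0 < ln 2) by (rewrite <- ln_1; apply ln_increasing; lra).
    unfold N. rewrite ln_pow, plus_INR by lra. simpl INR. field. lra. }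
  assert (Hlen : INR (length (hammersley_sym m s)) = N).
  { rewrite hammersley_sym_length, INR_pow2. unfold N. rewrite Nat.add_1_r. reflexivity. }
  destruct (disc_integral_near m s Hs) as [HI0 HI].
  change (L2_disc (hammersley_sym m s))
    with (/ INR (length (hammersley_sym m s)) * sqrt (disc_sq_integral (hammersley_sym m s))).
  rewrite Hlen, Hlog, <- Rmult_minus_distr_l, Rabs_mult, Rabs_inv, Rabs_right by lra.
  rewrite Rmult_comm. apply Rmult_le_compat_r; [left; apply Rinv_0_lt_compat; auto|].
  apply sqrt_diff_bound; auto. pose proof (pos_INR m). lra.
Qed.
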